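(* Let $k,\ell\ge1$ and $\vec x=(x_1,\dots,x_k)$, $\vec y=(y_1,\dots,y_\ell)$ be distinct commuting formal variables. Then: (1) for $\sigma\in\Sigma_k$, $\tau\in\Sigma_\ell$ and $(r,\alpha,\beta)\in\tilde{\mathfrak S}$, $\Phi_{r,\alpha,\beta}(\sigma(\vec x),\tau(\vec y))=\Phi_{r,\alpha\circ\sigma^{-1},\beta\circ\tau^{-1}}(\vec x,\vec y)$; (2) distinct triples in $\tilde{\mathfrak S}$ give distinct vectors $\Phi_{r,\alpha,\beta}(\vec x,\vec y)$; (3) $\tilde{\mathfrak S}=\{(r,\alpha\circ\sigma,\beta\circ\tau):(r,\alpha,\beta)\in\mathfrak S,\sigma\in\Sigma_k,\tau\in\Sigma_\ell\}$; this gives natural actions of $\Sigma_k\times\Sigma_\ell$ on $\tilde{\mathfrak S}$ and on $\{\Phi_{r,\alpha,\beta}(\vec x,\vec y):(r,\alpha,\beta)\in\tilde{\mathfrak S}\}$ (via $(\sigma,\tau)\cdot\Phi_{r,\alpha,\beta}(\vec x,\vec y)=\Phi_{r,\alpha,\beta}(\sigma(\vec x),\tau(\vec y))$), and the latter action is free; (4) for fixed $r_0$ with $\max(k,\ell)\le r_0\le k+\ell$ and $\tilde{\mathfrak S}_{r_0}=\{(r,\alpha,\beta)\in\tilde{\mathfrak S}:r=r_0\}$, every $\pi\in\Sigma_{r_0}$ satisfies $\pi(\Phi_{r_0,\alpha,\beta}(\vec x,\vec y))=\Phi_{r_0,\pi^{-1}\circ\alpha,\pi^{-1}\circ\beta}(\vec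 x,\vec y)$, giving a natural action of $\Sigma_{r_0}$ on $\tilde{\mathfrak S}_{r_0}$, and this action is free; (5) for $(r,\alpha,\beta)\in\tilde{\mathfrak S}$ with $\Phi_{r,\alpha,\beta}(\vec x,\vec y)=(z_1,\dots,z_r)$ and $1\le r'\le r''\le r$, put $\vec r^\sharp=(r',r'+1,\dots,r'')$, $\vec z^\sharp=(z_{r'},\dots,z_{r''})$, $\vec k^\sharp=\alpha^{-1}(\vec r^\sharp)$, $\vec\ell^\sharp=\beta^{-1}(\vec r^\sharp)$, with $\vec x^\sharp,\vec y^\sharp$ the corresponding subvectors of $\vec x,\vec y$; then $\vec z^\sharp=\Phi_{r^\sharp,\alpha|_{\vec k^\sharp},\beta|_{\vec\ell^\sharp}}(\vec x^\sharp,\vec y^\sharp)$.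
   Context: $[n]=\{1,\dots,n\}$. $\mathfrak S$ is the set of triples $(r,\alpha,\beta)$ with $\max(k,\ell)\le r\le k+\ell$, $\alpha:[k]\to[r]$, $\beta:[\ell]\to[r]$ order-preserving injections with $\mathrm{im}\,\alpha\cup\mathrm{im}\,\beta=[r]$; $\tilde{\mathfrak S}$ is defined the same way but with $\alpha,\beta$ arbitrary injections. For such a triple, $\Phi_{r,\alpha,\beta}(\vec x,\vec y)=(x_{\alpha^{-1}(1)}y_{\beta^{-1}(1)},\dots,x_{\alpha^{-1}(r)}y_{\beta^{-1}(r)})$ with the convention $x_\emptyset=y_\emptyset=1$ (so the $u$-th entry is $x_i$, $y_j$ or the formal product $x_iy_j$). For $\sigma\in\Sigma_k$, $\sigma(\vec x)=(x_{\sigma(1)},\dots,x_{\sigma(k)})$, and for $\pi\in\Sigma_{r}$ acting on a vector $(z_1,\dots,z_r)$, $\pi(\vec z)=(z_{\pi(1)},\dots,z_{\pi(r)})$. For subvectors $\vec k^\sharp,\vec\ell^\sharp,\vec r^\sharp=(r_{i_1},\dots,r_{i_{p}})$ of $[k],[\ell],[r]$ with $\alpha(\vec k^\sharp)\cup\beta(\vec\ell^\sharp)=\vec r^\sharp$, $\Phi_{r^\sharp,\alpha|_{\vec k^\sharp},\beta|_{\vec\ell^\sharp}}(\vec x^\sharp,\vec y^\sharp)=(x_{\alpha^{-1}(r_{i_1})}y_{\beta^{-1}(r_{i_1})},\dots,x_{\alpha^{-1}(r_{i_p})}y_{\beta^{-1}(r_{i_p})})$. *)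

(* Indices [n] = {1..n} are modelled by 'I_n = {0..n-1}. *)
From HB Require Import structures.
From mathcomp Require Import all_boot all_order all_algebra all_fingroup.
From mathcomp Require Import mpoly.
Set Implicit Arguments. Unset Strict Implicit. Unset Printing Implicit Defensive.

Definition triple (k l : nat) :=
  {r : nat & ({ffun 'I_k -> 'I_r} * {ffun 'I_l -> 'I_r})%type}.

Definition mkT k l r (a : 'I_k -> 'I_r) (b : 'I_l -> 'I_r) : triple k l :=
  existT (fun r => ({ffun 'I_k -> 'I_r} * {ffun 'I_l -> 'I_r})%type) r
         ([ffun i => a i], [ffun j => b j]).

Definition valid k l r (a : 'I_k -> 'I_r) (b : 'I_l -> 'I_r) : Prop :=
  [/\ maxn k l <= r <= k + l, injective a, injective b &
      forall u : 'I_r, (exists i, a i = u) \/ (exists j, b j = u)].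

Definition Stilde k l (t : triple k l) : Prop :=
  valid (tagged t).1 (tagged t).2.

Definition Sfrak k l (t : triple k l) : Prop :=
  [/\ Stilde t, {homo (tagged t).1 : i j / (i < j)%N >-> (i < j)%N} &
      {homo (tagged t).2 : i j / (i < j)%N >-> (i < j)%N}].

(* x_{o} with the convention x_emptyset = 1 *)
Definition optv (R : ringType) (I : finType) (x : I -> R) (o : option I) : R :=
  if o is Some i then x i else 1%R.

(* Phi_{r,alpha,beta}(x,y) as a vector 'I_r -> R ; alpha^{-1}(u) is the
   (unique, by injectivity) preimage if it exists *)
Definition PhiF (R : comRingType) k l r (a : 'I_k -> 'I_r) (b : 'I_l -> 'I_r)
  (x : 'I_k -> R) (y : 'I_l -> R) : 'I_r -> R :=
  fun u => (optv x [pick i | a i == u] * optv y [pick j | b j == u])%R.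

Definition PhiT (R : comRingType) k l (t : triple k l)
  (x : 'I_k -> R) (y : 'I_l -> R) : seq R :=
  [seq PhiF (tagged t).1 (tagged t).2 x y u | u <- enum 'I_(tag t)].

Definition actT k l (t : triple k l) (s : 'S_k) (tau : 'S_l) : triple k l :=
  mkT (fun i => (tagged t).1 ((s^-1)%g i)) (fun j => (tagged t).2 ((tau^-1)%g j)).

Definition optsub (R : ringType) (I : finType) (ks : seq I) (xs : seq R)
  (o : option I) : R :=
  if o is Some i then nth 1%R xs (index i ks) else 1%R.

Definition PhiSub (R : comRingType) k l r (rs : seq 'I_r) (ks : seq 'I_k)
  (ls : seq 'I_l) (a : 'I_k -> 'I_r) (b : 'I_l -> 'I_r) (xs ys : seq R) : seq R :=
  [seq (optsub ks xs [pick i | (i \in ks) && (a i == u)] *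
        optsub ls ys [pick j | (j \in ls) && (b j == u)])%R | u <- rs].

Definition Xv k l (i : 'I_k) : {mpoly int[k + l]} := 'X_(lshift l i).
Definition Yv k l (j : 'I_l) : {mpoly int[k + l]} := 'X_(rshift k j).
Arguments Xv k l i : clear implicits.
Arguments Yv k l j : clear implicits.

From HB Require Import structures.
From mathcomp Require Import all_boot all_order all_algebra all_fingroup.
From mathcomp Require Import mpoly.
Set Implicit Arguments. Unset Strict Implicit. Unset Printing Implicit Defensive.
Import GRing.Theory.

(* The entries of Phi(x, y) are the monomials x_i y_j, x_i and y_j
   in distinct variables, so each entry u determines the preimages alpha^-1(u)
   and beta^-1(u); hence Phi(x, y) determines (r, alpha, beta), and every
   permutation statement reduces to reindexing these preimages. An injection
   alpha is written as (sorted injection) o (permutation) by ranking its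
   values, which gives the decomposition of \tilde S over S. *)

Section PickPreimage.
Variables (T : finType) (U : eqType) (f : T -> U).

Lemma pick_preimage_eq u i : [pick j | f j == u] = Some i -> f i = u.
Proof. by case: pickP => // j /eqP fj [<-]. Qed.

Hypothesis f_inj : injective f.

Lemma pick_preimage i : [pick j | f j == f i] = Some i.
Proof.
by case: pickP => [j /eqP/f_inj -> //|/(_ i)]; rewrite eqxx.
Qed.

Lemma pick_preimage_perm (s : {perm T}) u :
  [pick i | f ((s^-1)%g i) == u] = omap s [pick i | f i == u].
Proof.
case: (pickP (fun i => f i == u)) => [i /eqP <-|no_preimage] /=.
  case: pickP => [j /eqP/f_inj <-|/(_ (s i))]; first by rewrite permKV.
  by rewrite permK eqxx.
by case: pickP => // i; rewrite no_preimage.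
Qed.

End PickPreimage.

Lemma optv_omap (R : nzRingType) (I J : finType) (x : I -> R) (s : J -> I) o :
  optv x (omap s o) = optv (x \o s) o.
Proof. by case: o. Qed.

Section PhiReindex.
Variables (R : comNzRingType) (k l r : nat) (a : 'I_k -> 'I_r) (b : 'I_l -> 'I_r).

Lemma PhiF_perm (p : 'S_r) (x : 'I_k -> R) (y : 'I_l -> R) u :
  PhiF a b x y (p u) = PhiF (p^-1%g \o a) (p^-1%g \o b) x y u.
Proof.
by rewrite /PhiF; congr (_ * _)%R; congr optv; apply: eq_pick => i /=;
   rewrite (can2_eq (permKV p) (permK p)).
Qed.

Lemma PhiF_comp_perm (s : 'S_k) (tau : 'S_l) (x : 'I_k -> R) (y : 'I_l -> R) u :
  injective a -> injective b ->
  PhiF a b (x \o s) (y \o tau) u = PhiF (a \o s^-1%g) (b \o tau^-1%g) x y u.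
Proof. by move=> a_inj b_inj; rewrite /PhiF !pick_preimage_perm // !optv_omap. Qed.

End PhiReindex.

Section Validity.
Variables (k l r : nat) (a : 'I_k -> 'I_r) (b : 'I_l -> 'I_r).

Lemma eq_valid (a' : 'I_k -> 'I_r) (b' : 'I_l -> 'I_r) :
  a =1 a' -> b =1 b' -> valid a b -> valid a' b'.
Proof.
move=> ea eb [hr a_inj b_inj cover]; split => //.
- exact: eq_inj a_inj ea.
- exact: eq_inj b_inj eb.
move=> u; case: (cover u) => [[i <-]|[j <-]]; [left; exists i|right; exists j].
  exact/esym/ea.
exact/esym/eb.
Qed.

Lemma valid_comp_perm (s : 'S_k) (tau : 'S_l) :
  valid a b -> valid (a \o s) (b \o tau).
Proof.
move=> [hr a_inj b_inj cover]; split => //.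
- exact: inj_comp a_inj perm_inj.
- exact: inj_comp b_inj perm_inj.
move=> u; case: (cover u) => [[i <-]|[j <-]].
  by left; exists (s^-1 i)%g; rewrite /= permKV.
by right; exists (tau^-1 j)%g; rewrite /= permKV.
Qed.

Lemma valid_perm_comp (p : 'S_r) : valid a b -> valid (p \o a) (p \o b).
Proof.
move=> [hr a_inj b_inj cover]; split => //.
- exact: inj_comp perm_inj a_inj.
- exact: inj_comp perm_inj b_inj.
move=> u; case: (cover (p^-1 u)%g) => [[i ai]|[j bj]].
  by left; exists i; rewrite /= ai permKV.
by right; exists j; rewrite /= bj permKV.
Qed.

Lemma valid_perm_fixed (p : 'S_r) :
  valid a b -> p \o a =1 a -> p \o b =1 b -> p = 1%g.
Proof.
move=> [_ _ _ cover] pa pb; apply/permP => u; rewrite perm1.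
by case: (cover u) => [[i <-]|[j <-]]; [exact: pa|exact: pb].
Qed.

End Validity.

Lemma inj_perm_fixed (T : finType) (U : Type) (c : T -> U) (p : {perm T}) :
  injective c -> c \o p^-1%g =1 c -> p = 1%g.
Proof.
move=> c_inj ec; apply/permP => i; rewrite perm1.
by apply/c_inj; rewrite -ec /= permK.
Qed.

Section Triples.
Variables k l : nat.

Lemma triple_mkT (t : triple k l) : t = mkT (tagged t).1 (tagged t).2.
Proof. by case: t => r [a b]; rewrite /mkT /= !ffunK. Qed.

Lemma eq_mkT r (a a' : 'I_k -> 'I_r) (b b' : 'I_l -> 'I_r) :
  a =1 a' -> b =1 b' -> mkT a b = mkT a' b'.
Proof. by move=> ea eb; congr existT; congr pair; apply/ffunP => i; rewrite !ffunE. Qed.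

Lemma mkT_inj r (a a' : 'I_k -> 'I_r) (b b' : 'I_l -> 'I_r) :
  mkT a b = mkT a' b' -> a =1 a' /\ b =1 b'.
Proof.
move=> /(@eq_from_Tagged _ (fun r => ({ffun 'I_k -> 'I_r} * {ffun 'I_l -> 'I_r})%type)) [].
by move=> /ffunP ea /ffunP eb; split=> i; [have := ea i | have := eb i]; rewrite !ffunE.
Qed.

Lemma Stilde_mkT r (a : 'I_k -> 'I_r) (b : 'I_l -> 'I_r) :
  Stilde (mkT a b) <-> valid a b.
Proof. by split; apply: eq_valid => i; rewrite /= ffunE. Qed.

Lemma PhiT_mkT (R : comNzRingType) r (a : 'I_k -> 'I_r) (b : 'I_l -> 'I_r)
    (x : 'I_k -> R) (y : 'I_l -> R) :
  PhiT (mkT a b) x y = [seq PhiF a b x y u | u <- enum 'I_r].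
Proof.
by apply: eq_map => u; rewrite /PhiF; congr (_ * _)%R; congr optv;
   apply: eq_pick => i; rewrite /= ffunE.
Qed.

Lemma size_PhiT (R : comNzRingType) (t : triple k l) (x : 'I_k -> R) (y : 'I_l -> R) :
  size (PhiT t x y) = tag t.
Proof. by rewrite size_map size_enum_ord. Qed.

Lemma Stilde_actT (t : triple k l) (s : 'S_k) (tau : 'S_l) :
  Stilde t -> Stilde (actT t s tau).
Proof. by move=> ht; apply/Stilde_mkT; apply: valid_comp_perm. Qed.

Lemma PhiT_actT (R : comNzRingType) (t : triple k l) (s : 'S_k) (tau : 'S_l)
    (x : 'I_k -> R) (y : 'I_l -> R) :
  Stilde t -> PhiT t (x \o s) (y \o tau) = PhiT (actT t s tau) x y.
Proof.
case: t => r [a b] [_ a_inj b_inj _]; rewrite PhiT_mkT.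
by apply: eq_map => u; apply: PhiF_comp_perm.
Qed.

Lemma actT_free (t : triple k l) (s : 'S_k) (tau : 'S_l) :
  Stilde t -> actT t s tau = t -> s = 1%g /\ tau = 1%g.
Proof.
case: t => r [a b] [_ a_inj b_inj _].
rewrite {2}[existT _ r _]triple_mkT => /mkT_inj [ea eb].
by split; [apply: inj_perm_fixed ea | apply: inj_perm_fixed eb].
Qed.

End Triples.

Section SortedFactor.
Variables (k r : nat) (f : 'I_k -> 'I_r).
Hypothesis f_inj : injective f.

Let rank i := #|[pred j | f j < f i]|.

Lemma rank_lt i : rank i < k.
Proof.
rewrite -[k]card_ord; apply/proper_card/properP; split; first exact/subset_predT.
by exists i; rewrite ?inE /= ?ltnn.
Qed.

Lemma rank_homo p q : f p < f q -> rank p < rank q.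
Proof.
move=> fpq; apply/proper_card/properP; split; last by exists p; rewrite ?inE ?ltnn.
by apply/subsetP => j; rewrite !inE => /ltn_trans; apply.
Qed.

Lemma rank_inj : injective (fun i => Ordinal (rank_lt i)).
Proof.
move=> p q [] e; case: (ltngtP (f p) (f q)) => [/rank_homo|/rank_homo|/val_inj/f_inj //];
  by rewrite e ltnn.
Qed.

Lemma exists_sorted_factor : exists (a : 'I_k -> 'I_r) (s : 'S_k),
  {homo a : i j / i < j} /\ forall i, a (s i) = f i.
Proof.
pose s := perm rank_inj; exists (f \o s^-1%g), s; split => [i j ij|i]; last first.
  by rewrite /= permK.
have rank_s i' : rank ((s^-1)%g i') = i' by rewrite -{2}(permKV s i') [s _]permE.
move: ij; rewrite -(rank_s i) -(rank_s j) /=.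
case: (ltngtP (f _) (f _)) => // [/rank_homo/ltn_trans h /h|/val_inj/f_inj ->];
  by rewrite ltnn.
Qed.

End SortedFactor.

Lemma Stilde_orbitP k l (t : triple k l) :
  Stilde t <-> exists r (a : 'I_k -> 'I_r) (b : 'I_l -> 'I_r) (s : 'S_k) (tau : 'S_l),
    Sfrak (mkT a b) /\ t = mkT (a \o s) (b \o tau).
Proof.
split; last first.
  by move=> [r [a [b [s [tau [[/Stilde_mkT hv _ _] ->]]]]]]; apply/Stilde_mkT/valid_comp_perm.
case: t => r [A B] hv; have [_ A_inj B_inj _] := hv.
have [a [s [a_homo eA]]] := exists_sorted_factor A_inj.
have [b [tau [b_homo eB]]] := exists_sorted_factor B_inj.
exists r, a, b, s, tau; split; last first.
  by rewrite [LHS]triple_mkT; apply: eq_mkT => i /=; rewrite ?eA ?eB.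
split; last 2 first.
- by move=> i j; rewrite !ffunE; apply: a_homo.
- by move=> i j; rewrite !ffunE; apply: b_homo.
apply/Stilde_mkT; apply: eq_valid (valid_comp_perm s^-1 tau^-1 hv) => i /=.
  by rewrite -eA permKV.
by rewrite -eB permKV.
Qed.

Lemma eq_option_Some (T : eqType) (o o' : option T) :
  (forall i, (o == Some i) = (o' == Some i)) -> o = o'.
Proof.
case: o o' => [i|] [j|] // e; [have := e i | have := e i | have := e j];
  by rewrite eqxx // => /esym/eqP ->.
Qed.

Definition mnm_opt n (I : finType) (f : I -> 'I_n) (o : option I) : 'X_{1..n} :=
  if o is Some i then U_(f i)%MM else 0%MM.

Lemma optv_mpolyX (R : nzRingType) n (I : finType) (f : I -> 'I_n) o :
  optv (fun i => 'X_(f i) : {mpoly R[n]}) o = 'X_[mnm_opt f o].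
Proof. by case: o => [i|] //=; rewrite mpolyX0. Qed.

Lemma mnm_opt_Some n (I : finType) (f : I -> 'I_n) :
  injective f -> forall o i, mnm_opt f o (f i) = (o == Some i).
Proof. by move=> f_inj [j|] i /=; rewrite ?mnm0E // mnm1E (inj_eq f_inj). Qed.

Lemma mnm_opt_out n (I : finType) (f : I -> 'I_n) m :
  (forall i, f i != m) -> forall o, mnm_opt f o m = 0.
Proof. by move=> fm [i|] /=; rewrite ?mnm0E // mnm1E (negbTE (fm i)). Qed.

Lemma mpolyX_inj (R : nzRingType) n :
  injective (fun m : 'X_{1..n} => 'X_[m] : {mpoly R[n]}).
Proof.
move=> m1 m2 /(congr1 (mcoeff m1)); rewrite !mcoeffX eqxx.
by case: eqP => // _ /eqP; rewrite oner_eq0.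
Qed.

Section FormalVariables.
Variables k l : nat.

Lemma optv_XY_inj o1 o2 o1' o2' :
  (optv (Xv k l) o1 * optv (Yv k l) o2 = optv (Xv k l) o1' * optv (Yv k l) o2')%R ->
  o1 = o1' /\ o2 = o2'.
Proof.
rewrite /Xv /Yv !optv_mpolyX -!mpolyXD => /mpolyX_inj/mnmP e.
have r_notl i : forall j, rshift k j != lshift l i by move=> j; rewrite eq_rlshift.
have l_notr j : forall i, lshift l i != rshift k j by move=> i; rewrite eq_lrshift.
split; apply: eq_option_Some => i.
  have := e (lshift l i).
  rewrite !mnmDE !(mnm_opt_Some (@lshift_inj _ _)) !(mnm_opt_out (r_notl i)) !addn0.
  by do 2!case: (_ == _).
have := e (rshift k i).
rewrite !mnmDE !(mnm_opt_Some (@rshift_inj _ _)) !(mnm_opt_out (l_notr i)).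
by do 2!case: (_ == _).
Qed.

Lemma PhiF_XY_inj r (a a' : 'I_k -> 'I_r) (b b' : 'I_l -> 'I_r) :
  injective a -> injective b ->
  PhiF a b (Xv k l) (Yv k l) =1 PhiF a' b' (Xv k l) (Yv k l) -> a =1 a' /\ b =1 b'.
Proof.
move=> a_inj b_inj e; have pick_eq u := optv_XY_inj (e u).
split=> i; apply/esym/pick_preimage_eq.
  by rewrite -(pick_eq (a i)).1; apply: pick_preimage.
by rewrite -(pick_eq (b i)).2; apply: pick_preimage.
Qed.

Lemma PhiT_XY_inj (t1 t2 : triple k l) :
  Stilde t1 -> PhiT t1 (Xv k l) (Yv k l) = PhiT t2 (Xv k l) (Yv k l) -> t1 = t2.
Proof.
case: t1 t2 => [r1 [a1 b1]] [r2 [a2 b2]] [_ a_inj b_inj _] e.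
have er : r1 = r2 by have := congr1 size e; rewrite !size_PhiT.
subst r2; move: e; rewrite [existT _ r1 (a1, b1)]triple_mkT [existT _ r1 (a2, b2)]triple_mkT.
rewrite !PhiT_mkT => /eq_in_map e.
have [ea eb] := PhiF_XY_inj a_inj b_inj (fun u => e u (mem_enum _ u)).
exact: eq_mkT.
Qed.

End FormalVariables.

Lemma pick_preimage_in (T : finType) (U : eqType) (f : T -> U) (ks : seq T) u :
  (forall i, f i = u -> i \in ks) ->
  [pick i | (i \in ks) && (f i == u)] = [pick i | f i == u].
Proof. by move=> ks_pre; apply: eq_pick => i /=; case: eqP => [/ks_pre ->|]; rewrite ?andbF. Qed.

Lemma optsub_map (R : nzRingType) (I : finType) (ks : seq I) (x : I -> R) o :
  (forall i, o = Some i -> i \in ks) -> optsub ks (map x ks) o = optv x o.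
Proof. by case: o => [i /(_ i erefl) iks|] //=; rewrite (nth_map i) ?index_mem ?nth_index. Qed.

Lemma map_PhiF_PhiSub (R : comNzRingType) k l r (a : 'I_k -> 'I_r) (b : 'I_l -> 'I_r)
    (x : 'I_k -> R) (y : 'I_l -> R) (rs : seq 'I_r) :
  injective a -> injective b ->
  let ks := pmap (fun u => [pick i | a i == u]) rs in
  let ls := pmap (fun u => [pick j | b j == u]) rs in
  [seq PhiF a b x y u | u <- rs] = PhiSub rs ks ls a b (map x ks) (map y ls).
Proof.
move=> a_inj b_inj ks ls; apply/eq_in_map => u urs.
have ks_pre i : a i = u -> i \in ks.
  by move=> ai; rewrite mem_pmap -(pick_preimage a_inj) ai (map_f (fun v => [pick i | a i == v]) urs).
have ls_pre j : b j = u -> j \in ls.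
  by move=> bj; rewrite mem_pmap -(pick_preimage b_inj) bj (map_f (fun v => [pick j | b j == v]) urs).
rewrite /PhiF (pick_preimage_in ks_pre) (pick_preimage_in ls_pre).
by rewrite !optsub_map // => i /pick_preimage_eq; [apply: ls_pre | apply: ks_pre].
Qed.
Theorem lemma6p2 (k l : nat) (hk : (0 < k)%N) (hl : (0 < l)%N) :
  (* (1) *)
  (forall (s : 'S_k) (tau : 'S_l) (r : nat) (a : 'I_k -> 'I_r) (b : 'I_l -> 'I_r),
      valid a b ->
      forall u : 'I_r,
        PhiF a b (fun i => Xv k l (s i)) (fun j => Yv k l (tau j)) u =
        PhiF (fun i => a ((s^-1)%g i)) (fun j => b ((tau^-1)%g j))
             (Xv k l) (Yv k l) u)
  /\
  (* (2) *)
  (forall t1 t2 : triple k l, Stilde t1 -> Stilde t2 -> t1 <> t2 ->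
      PhiT t1 (Xv k l) (Yv k l) <> PhiT t2 (Xv k l) (Yv k l))
  /\
  (* (3) *)
  ((forall t : triple k l,
      Stilde t <-> exists (r : nat) (a : 'I_k -> 'I_r) (b : 'I_l -> 'I_r)
                          (s : 'S_k) (tau : 'S_l),
          Sfrak (mkT a b) /\ t = mkT (fun i => a (s i)) (fun j => b (tau j)))
   /\ (forall (t : triple k l) (s : 'S_k) (tau : 'S_l),
         Stilde t -> Stilde (actT t s tau))
   /\ (forall (t : triple k l) (s : 'S_k) (tau : 'S_l), Stilde t ->
         exists t' : triple k l, Stilde t' /\
           PhiT t (fun i => Xv k l (s i)) (fun j => Yv k l (tau j)) =
           PhiT t' (Xv k l) (Yv k l))
   /\ (forall (t : triple k l) (s : 'S_k) (tau : 'S_l), Stilde t ->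
         PhiT t (fun i => Xv k l (s i)) (fun j => Yv k l (tau j)) =
         PhiT t (Xv k l) (Yv k l) -> s = 1%g /\ tau = 1%g))
  /\
  (* (4) *)
  (forall r0 : nat, (maxn k l <= r0 <= k + l)%N ->
     forall (p : 'S_r0) (a : 'I_k -> 'I_r0) (b : 'I_l -> 'I_r0), valid a b ->
       [/\ forall u : 'I_r0,
             PhiF a b (Xv k l) (Yv k l) (p u) =
             PhiF (fun i => (p^-1)%g (a i)) (fun j => (p^-1)%g (b j))
                  (Xv k l) (Yv k l) u,
           valid (fun i => (p^-1)%g (a i)) (fun j => (p^-1)%g (b j)) &
           mkT (fun i => (p^-1)%g (a i)) (fun j => (p^-1)%g (b j)) = mkT a b ->
             p = 1%g])
  /\
  (* (5) *)
  (forall (r : nat) (a : 'I_k -> 'I_r) (b : 'I_l -> 'I_r), valid a b ->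
     forall r1 r2 : nat, (r1 <= r2 < r)%N ->
       let rs := [seq u : 'I_r <- enum 'I_r | (r1 <= u <= r2)%N] in
       let ks := pmap (fun u => [pick i | a i == u]) rs in
       let ls := pmap (fun u => [pick j | b j == u]) rs in
       [seq PhiF a b (Xv k l) (Yv k l) u | u <- rs] =
       PhiSub rs ks ls a b (map (Xv k l) ks) (map (Yv k l) ls)).
Proof.
split.
  by move=> s tau r a b [_ a_inj b_inj _] u; apply: PhiF_comp_perm.
split.
  by move=> t1 t2 ht1 _ ne /(PhiT_XY_inj ht1).
split.
  split; first by move=> t; apply: Stilde_orbitP.
  split; first exact: Stilde_actT.
  split.
    move=> t s tau ht; exists (actT t s tau).
    by split; [apply: Stilde_actT | apply: PhiT_actT].
  move=> t s tau ht; rewrite PhiT_actT // => /(PhiT_XY_inj (Stilde_actT s tau ht)).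
  exact: actT_free.
split.
  move=> r0 _ p a b hv; split; first exact: PhiF_perm.
    exact: valid_perm_comp.
  move=> /mkT_inj [ea eb].
  by rewrite -[p]invgK (valid_perm_fixed hv ea eb) invg1.
by move=> r a b [_ a_inj b_inj _] r1 r2 _; apply: map_PhiF_PhiSub.
Qed.
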